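(* Let $G_d=(\mathcal{N},\mathcal{E}_d)$ be a directed acyclic graph with agents indexed in topological order, and let $\{\pi^k\}$ be the sequence of deterministic joint policies generated by Action-Dependent Multi-Agent Policy Iteration associated with $G_d$, under the Singleton Argmax Assumption. Let $V^{\circ}=\lim_{k\to\infty}V^{\pi^k}$ and let $G_c=(\mathcal{N},\mathcal{E}_c)$ be a coordination graph of the function $Q^{V^{\circ}}(s,a)=r(s,a)+\gamma\sum_{s'}P(s'|s,a)V^{\circ}(s')$. If $N_d(i)=N_c(i^{[+]})$ for all $i\in\mathcal{N}$, then there exists $K$ with $\pi^k=\pi^K$ for all $k\ge K$, and $\pi^K$ is globally optimal ($V^{\pi^K}=V^*$).
   Context: Markov game $\langle \mathcal{N},\mathcal{S},\mathcal{A},P,r,\gamma\rangle$: agents $\mathcal{N}=\{1,\dots,n\}$, finite state space $\mathcal{S}$, finite action spaces $\mathcal{A}_i$, $\mathcal{A}=\prod_i\mathcal{A}_i$, transition kernel $P$, reward $r$, discount $\gamma\in[0,1)$; $V^\pi$, $Q^\pi$ are the usual discounted value functions and $V^*$ the optimal value function. (The limit $V^\circ$ exists: the sequence $V^{\pi^k}$ is eventually constant.) Notation: $a_S=(a_j)_{j\in S}$, $\mathcal{A}_S=\prod_{j\in S}\mathcal{A}_j$, $-S=\mathcal{N}\setminus S$, $i^{[+]}=\{i,\dots,n\}$. Coordination graph: undirected $G_c=(\mathcal{N},\mathcal{E}_c)$ is a CG of $Q:\mathcal{S}\times\mathcal{A}\to\mathbb{R}$ if $Q(s,a)=\sum_iQ_i(s,a_i)+\sum_{(i,j)\in\mathcal{E}_c}Q_{ij}(s,a_i,a_j)$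 for some functions $Q_i,Q_{ij}$. $N_c(S)=(\bigcup_{i\in S}N_c(i))\setminus S$ where $N_c(i)$ are the neighbors of $i$. ADG: directed acyclic $G_d$, $N_d(i)=\{j:(j,i)\in\mathcal{E}_d\}$, $N_d[i]=N_d(i)\cup\{i\}$, $j<i$ for $j\in N_d(i)$. A deterministic policy associated with $G_d$ consists of maps $\pi_i:\mathcal{S}\times\mathcal{A}_{N_d(i)}\to\mathcal{A}_i$, executed in index order. For fixed $a_{N_d[i]}$, $\pi_{-N_d[i]}(s,a_{N_d[i]})$ denotes the actions of agents outside $N_d[i]$ obtained by executing their policies in index order with $a_{N_d[i]}$ held fixed. Action-Dependent Multi-Agent Policy Iteration: initialize deterministic $\pi^0$ associated with $G_d$; for $k=0,1,\dots$ compute $Q^{\pi^k}$, then for $i=1,\dots,n$, with $\pi^{k,i}=(\pi^{k+1}_1,\dots,\pi^{k+1}_{i-1},\pi^k_i,\dots,\pi^k_n)$, set for all $s,a_{N_d(i)}$: $\pi^{k+1}_i(s,a_{N_d(i)})\in\arg\max_{a_i}Q^{\pi^k}(s,a_{N_d[i]},\pi^{k,i}_{-N_d[i]}(s,a_{N_d[i]}))$. Singleton Argmax Assumption: each such argmax set is a singleton for all $k\ge1$, $i$, $s$, $a_{N_d(i)}$. *)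

From HB Require Import structures.
From mathcomp Require Import all_boot all_order all_algebra.
From mathcomp Require Import all_classical all_reals all_analysis.
Set Implicit Arguments. Unset Strict Implicit. Unset Printing Implicit Defensive.
Import Order.TTheory GRing.Theory Num.Theory.
Import numFieldNormedType.Exports.
Local Open Scope ring_scope.
Local Open Scope classical_set_scope.

Section MG.
Variables (R : realType) (n : nat) (S : finType) (Act : 'I_n -> finType).

Definition joint := {dffun forall i : 'I_n, Act i}.

Definition jupd (a : joint) (i : 'I_n) (x : Act i) : joint :=
  finfun (@dfwith _ (fun j => Act j) (fun j => a j) i x).

(* The input
   of pi_i is a joint action, of which only the coordinates in N_d(i) may be
   used (see [assoc]); this encodes pi_i : S x A_{N_d(i)} -> A_i. *)
Definition dpolicy := forall i : 'I_n, S -> joint -> Act i.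

Definition assoc (Ed : rel 'I_n) (pi : dpolicy) : Prop :=
  forall i s (a b : joint), (forall j, Ed j i -> a j = b j) -> pi i s a = pi i s b.

(* For an ADG (Ed j i -> j < i), n rounds of the update
   b_j := (if j \in F then a_j else pi_j(s, b)) reach the fixed point, which
   is exactly the sequential execution in index order. *)
Definition exec (pi : dpolicy) (s : S) (F : {set 'I_n}) (a : joint) : joint :=
  iter n (fun b : joint => finfun (fun j => if j \in F then a j else pi j s b)) a.

Definition Nd (Ed : rel 'I_n) (i : 'I_n) : {set 'I_n} := [set j | Ed j i].
Definition Ndc (Ed : rel 'I_n) (i : 'I_n) : {set 'I_n} := i |: Nd Ed i.

Definition Nc (Ec : rel 'I_n) (T : {set 'I_n}) : {set 'I_n} :=
  [set j | [exists i in T, Ec i j]] :\: T.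
Definition iplus (i : 'I_n) : {set 'I_n} := [set j : 'I_n | (i <= j)%N].

(* Coordination graph (undirected: Ec symmetric, irreflexive; each edge
   {i,j} counted once, as the pair i < j). *)
Definition is_CG (Ec : rel 'I_n) (Q : S -> joint -> R) : Prop :=
  exists (Qi : forall i : 'I_n, S -> Act i -> R)
         (Qij : forall i j : 'I_n, S -> Act i -> Act j -> R),
  forall s (a : joint),
    Q s a = \sum_(i < n) Qi i s (a i)
            + \sum_(i < n) \sum_(j < n | (i < j)%N && Ec i j) Qij i j s (a i) (a j).

Variables (P : S -> joint -> S -> R) (r : S -> joint -> R) (gamma : R).

Fixpoint sdist (sigma : S -> joint) (s : S) (t : nat) : S -> R :=
  match t with
  | 0 => fun s' => (s' == s)%:R
  | t'.+1 => fun s' => \sum_(s'' : S) sdist sigma s t' s'' * P s'' (sigma s'') s'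
  end.

Definition Vsig (sigma : S -> joint) (s : S) : R :=
  limn (fun N => \sum_(t < N) gamma ^+ t *
                   \sum_(s' : S) sdist sigma s t s' * r s' (sigma s')).

Definition QofV (V : S -> R) (s : S) (a : joint) : R :=
  r s a + gamma * \sum_(s' : S) P s a s' * V s'.

Definition Vstar (s : S) : R := sup [set Vsig sigma s | sigma in [set: S -> joint]].

(* joint action of a decentralized policy at s (a0 is any starting point;
   the result does not depend on it for policies associated with an ADG) *)
Definition jact (a0 : joint) (pi : dpolicy) (s : S) : joint := exec pi s finset.set0 a0.

Definition Vpol (a0 : joint) (pi : dpolicy) (s : S) : R := Vsig (jact a0 pi) s.
Definition Qpol (a0 : joint) (pi : dpolicy) : S -> joint -> R := QofV (Vpol a0 pi).

Definition mixpol (pinew piold : dpolicy) (i : 'I_n) : dpolicy :=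
  fun j => if (j < i)%N then pinew j else piold j.

(* the objective maximized by agent i at iteration k, as a function of a_i,
   with a_{N_d(i)} taken from a:  Q^{pi^k}(s, a_{N_d[i]}, pi^{k,i}_{-N_d[i]}) *)
Definition objective (Ed : rel 'I_n) (a0 : joint) (pik pik1 : dpolicy)
  (i : 'I_n) (s : S) (a : joint) (x : Act i) : R :=
  Qpol a0 pik s (exec (mixpol pik1 pik i) s (Ndc Ed i) (jupd a x)).

Definition Vcirc (a0 : joint) (pis : nat -> dpolicy) (s : S) : R :=
  limn (fun k => Vpol a0 (pis k) s).

Definition is_argmax (T : Type) (f : T -> R) (x : T) : Prop := forall y, f y <= f x.

End MG.
Arguments objective {R n S Act} P r gamma Ed a0 pik pik1 i s a x.

(* Each sweep of agent updates is a policy-improvement step: passing through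
   the partially updated joint policies shows Q^k(s, pi^k(s)) <= Q^k(s, pi^{k+1}(s)),
   so V^{pi^k} is nondecreasing; being the value of one of finitely many
   deterministic policies, it is eventually constant, equal to V^o, and from
   then on every agent maximises Q^o.  Because N_d(i) = N_c(i^[+]), the
   differences of Q^o between actions of agent i only involve agent i, its
   successors and its parents, so by the singleton argmax assumption the
   policies freeze from the last agent down to the first.  For the frozen
   policy every agent best-responds in Q^o, and releasing the agents one at a
   time from an arbitrary joint action never decreases Q^o; hence the frozen
   joint action maximises Q^o(s, .), and V^{pi^K} dominates the value of every
   deterministic policy. *)

From HB Require Import structures.
From mathcomp Require Import all_boot all_order all_algebra.
From mathcomp Require Import all_classical all_reals all_analysis.
From mathcomp Require Import lra zify.
Import Order.TTheory GRing.Theory Num.Theory.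
Import numFieldNormedType.Exports.
Local Open Scope ring_scope.
Local Open Scope classical_set_scope.
Set Implicit Arguments. Unset Strict Implicit. Unset Printing Implicit Defensive.

Section JointUpdate.
Variables (n : nat) (Act : 'I_n -> finType).

Lemma jupd_id (a : joint Act) i : jupd a (a i) = a.
Proof. by apply/ffunP => j; rewrite ffunE; case: dfwithP. Qed.

Lemma jupd_same (a : joint Act) i (x : Act i) : jupd a x i = x.
Proof. by rewrite ffunE; exact: dfwith_in. Qed.

Lemma jupd_other (a : joint Act) i (x : Act i) j : i != j -> jupd a x j = a j.
Proof. by move=> neq_ij; rewrite ffunE; exact: dfwith_out. Qed.

End JointUpdate.

Section Execution.
Variables (n : nat) (S : finType) (Act : 'I_n -> finType) (Ed : rel 'I_n).
Hypothesis Ed_lt : forall i j : 'I_n, Ed j i -> (j < i)%N.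

Lemma ord_ltn_ind (Pr : 'I_n -> Prop) :
  (forall j : 'I_n, (forall l : 'I_n, (l < j)%N -> Pr l) -> Pr j) -> forall j, Pr j.
Proof.
move=> IH j; have [m lt_jm] : exists m, (j < m)%N by exists j.+1.
elim: m j lt_jm => [//|m IHm] j lt_jm.
by apply: IH => l lt_lj; apply: IHm; apply: leq_trans lt_lj _.
Qed.

Definition exec_spec (pi : dpolicy S Act) s (F : {set 'I_n}) (a b : joint Act) :=
  forall j, b j = if j \in F then a j else pi j s b.

Lemma exec_specP (pi : dpolicy S Act) s F (a : joint Act) :
  assoc Ed pi -> exec_spec pi s F a (exec pi s F a).
Proof.
move=> pi_assoc.
set step := fun b : joint Act => [ffun j => if j \in F then a j else pi j s b].
have stable t (j : 'I_n) : (j < t)%N -> iter t.+1 step a j = iter t step a j.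
  elim: t j => [//|t IH] j lt_jt.
  rewrite iterS [in RHS]iterS /step !ffunE; case: ifP => // _.
  by apply: pi_assoc => l /Ed_lt lt_lj; apply: IH; apply: leq_trans lt_lj _.
move=> j; rewrite /exec -/step.
have <- : step (iter n step a) j = iter n step a j by rewrite -iterS stable.
by rewrite /step ffunE.
Qed.

Lemma exec_spec_agree (pi1 pi2 : dpolicy S Act) s F1 F2 a1 a2 b1 b2
    (Z : pred 'I_n) :
  assoc Ed pi1 -> exec_spec pi1 s F1 a1 b1 -> exec_spec pi2 s F2 a2 b2 ->
  (forall j, Z j -> (j \in F1) = (j \in F2)) ->
  (forall j, Z j -> j \in F1 -> a1 j = a2 j) ->
  (forall j, Z j -> j \notin F1 ->
      (forall c, pi1 j s c = pi2 j s c) /\ forall l, Ed l j -> Z l) ->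
  forall j, Z j -> b1 j = b2 j.
Proof.
move=> pi1_assoc b1_spec b2_spec eqF eqa eqpi; apply: ord_ltn_ind => j IH Zj.
rewrite b1_spec b2_spec -eqF //; case: ifP => jF; first exact: eqa.
have [eqpij Zpred] := eqpi j Zj (negbT jF); rewrite -eqpij.
by apply: pi1_assoc => l El; apply: IH; [exact: Ed_lt | exact: Zpred].
Qed.

Lemma exec_spec_uniq (pi : dpolicy S Act) s F (a b1 b2 : joint Act) :
  assoc Ed pi -> exec_spec pi s F a b1 -> exec_spec pi s F a b2 -> b1 = b2.
Proof.
move=> pi_assoc b1_spec b2_spec; apply/ffunP => j.
exact: (exec_spec_agree (Z := predT) pi_assoc b1_spec b2_spec).
Qed.

Lemma exec_set0_indep (pi1 pi2 : dpolicy S Act) s (a1 a2 : joint Act) :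
  assoc Ed pi1 -> assoc Ed pi2 -> (forall j c, pi1 j s c = pi2 j s c) ->
  exec pi1 s finset.set0 a1 = exec pi2 s finset.set0 a2.
Proof.
move=> pi1_assoc pi2_assoc eqpi; apply/ffunP => j.
apply: (exec_spec_agree (Z := predT) pi1_assoc (exec_specP _ _ _ pi1_assoc)
  (exec_specP _ _ _ pi2_assoc)) => // j' _.
by rewrite finset.in_set0.
Qed.

Lemma exec_fullset (pi : dpolicy S Act) s (b : joint Act) :
  assoc Ed pi -> exec pi s [set j : 'I_n | (j < n)%N] b = b.
Proof.
move=> pi_assoc; apply: (exec_spec_uniq pi_assoc (exec_specP _ _ _ pi_assoc)).
by move=> j; rewrite inE ltn_ord.
Qed.

Lemma exec_prefixS (pi : dpolicy S Act) s (b : joint Act) (i : 'I_n) : assoc Ed pi ->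
  exec pi s [set j : 'I_n | (j < i.+1)%N] (jupd b (pi i s b)) =
  exec pi s [set j : 'I_n | (j < i)%N] b.
Proof.
move=> pi_assoc; set G := exec pi s _ (jupd b _).
have G_spec := exec_specP s [set j : 'I_n | (j < i.+1)%N] (jupd b (pi i s b)) pi_assoc.
apply: (exec_spec_uniq pi_assoc _ (exec_specP _ _ _ pi_assoc)).
have G_pre (l : 'I_n) : (l < i)%N -> G l = b l.
  by move=> lt_li; rewrite G_spec inE ltnS (ltnW lt_li) jupd_other // neq_ltn lt_li orbT.
move=> j; rewrite inE; case: (eqVneq i j) => [<-|neq_ij].
  rewrite ltnn G_spec inE ltnSn jupd_same.
  by apply: pi_assoc => l /Ed_lt lt_li; rewrite G_pre.
case: ifP => lt_ji; first exact: G_pre.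
have neq_ji : (j : nat) != i by rewrite eq_sym.
by rewrite G_spec inE ltnS leq_eqVlt lt_ji orbF (negbTE neq_ji).
Qed.

Lemma exec_jupd_lt (pi : dpolicy S Act) s F (a : joint Act) (i : 'I_n) (x y : Act i) :
  assoc Ed pi -> forall j : 'I_n, (j < i)%N ->
  exec pi s F (jupd a x) j = exec pi s F (jupd a y) j.
Proof.
move=> pi_assoc; apply: (exec_spec_agree (Z := fun j : 'I_n => (j < i)%N) pi_assoc
  (exec_specP _ _ _ pi_assoc) (exec_specP _ _ _ pi_assoc)) => // j lt_ji.
- by move=> _; rewrite !jupd_other // neq_ltn lt_ji orbT.
- by move=> _; split => // l /Ed_lt lt_lj; apply: ltn_trans lt_lj lt_ji.
Qed.

Lemma assoc_mixpol (pi1 pi2 : dpolicy S Act) i :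
  assoc Ed pi1 -> assoc Ed pi2 -> assoc Ed (mixpol pi1 pi2 i).
Proof. by move=> pi1_assoc pi2_assoc j s a b eq_ab; rewrite /mixpol; case: ifP => _; auto. Qed.

End Execution.

Section Zone.
Variables (R : realType) (n : nat) (S : finType) (Act : 'I_n -> finType).
Variables (Ed Ec : rel 'I_n).
Hypothesis Ed_lt : forall i j : 'I_n, Ed j i -> (j < i)%N.
Hypothesis Ec_sym : symmetric Ec.
Hypothesis Nd_Nc : forall i : 'I_n, Nd Ed i = Nc Ec (iplus i).

(* Thanks to N_d(i) = N_c(i^[+])
   this set is closed under the ADG-parents of its members j >= i, and it
   contains both ends of every CG-edge that touches i^[+]. *)
Definition zone (i j : 'I_n) := (i <= j)%N || (j \in Nd Ed i).

Lemma zone_parent (i j l : 'I_n) : (i <= j)%N -> Ed l j -> zone i l.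
Proof.
move=> le_ij Elj; rewrite /zone; case: (leqP i l) => //= lt_li.
have : l \in Nd Ed j by rewrite inE.
rewrite !Nd_Nc /Nc /iplus !inE -!ltnNge lt_li /=.
move=> /andP [_ /existsP [m /andP [le_jm Eml]]]; apply/existsP; exists m.
by move: le_jm; rewrite !inE Eml andbT => /(leq_trans le_ij).
Qed.

Lemma zone_mem_Ndc (i j : 'I_n) : zone i j -> (j \in Ndc Ed i) = (j < i.+1)%N.
Proof.
rewrite /zone /Ndc !inE ltnS => /orP [le_ij|Eji]; first last.
  by rewrite Eji orbT ltnW ?Ed_lt.
case: (eqVneq j i) => [->|neq_ji /=]; first by rewrite leqnn.
have lt_ij : (i < j)%N.
  by rewrite ltn_neqAle le_ij andbT; apply: contra neq_ji => /eqP/val_inj ->.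
rewrite leqNgt lt_ij; apply/negbTE/negP => /Ed_lt.
by rewrite ltnNge (ltnW lt_ij).
Qed.

Lemma exec_zone_agree (p1 p2 : dpolicy S Act) s (F1 F2 : {set 'I_n}) (a : joint Act)
    (i : 'I_n) :
  assoc Ed p1 -> assoc Ed p2 ->
  (forall j, zone i j -> (j \in F1) = (j < i.+1)%N) ->
  (forall j, zone i j -> (j \in F2) = (j < i.+1)%N) ->
  (forall j : 'I_n, (i < j)%N -> forall c, p1 j s c = p2 j s c) ->
  forall j, zone i j -> exec p1 s F1 a j = exec p2 s F2 a j.
Proof.
move=> p1_assoc p2_assoc F1_zone F2_zone eq_p.
apply: (exec_spec_agree Ed_lt (Z := zone i) p1_assoc (exec_specP Ed_lt _ _ _ p1_assoc)
  (exec_specP Ed_lt _ _ _ p2_assoc)) => [j Zj|//|j Zj].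
  by rewrite F1_zone ?F2_zone.
rewrite F1_zone // -leqNgt => lt_ij; split; first exact: eq_p.
by move=> l; apply: zone_parent (ltnW lt_ij).
Qed.

(* In the CG decomposition, every term involving an agent of i^[+] only
   involves agents of [zone i]; all other terms only involve agents below i. *)
Lemma CG_diff_zone (Q : S -> joint Act -> R) (i : 'I_n) s (b1 b2 b3 b4 : joint Act) :
  is_CG Ec Q ->
  (forall j, zone i j -> b1 j = b3 j /\ b2 j = b4 j) ->
  (forall j : 'I_n, (j < i)%N -> b1 j = b2 j /\ b3 j = b4 j) ->
  Q s b1 - Q s b2 = Q s b3 - Q s b4.
Proof.
move=> [Qi [Qij Q_CG]] zone_eq below_eq; rewrite !Q_CG.
set X := fun b : joint Act => \sum_(j < n) Qi j s (b j).
set Y := fun b : joint Act =>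
  \sum_(j < n) \sum_(l < n | (j < l)%N && Ec j l) Qij j l s (b j) (b l).
have X_diff : X b1 - X b2 = X b3 - X b4.
  rewrite /X -!sumrB; apply: eq_bigr => j _.
  case: (leqP i j) => [le_ij|lt_ji].
    by have [-> ->] := zone_eq j (introT orP (or_introl le_ij)).
  by have [-> ->] := below_eq j lt_ji; rewrite !subrr.
have Y_diff : Y b1 - Y b2 = Y b3 - Y b4.
  rewrite /Y -!sumrB; apply: eq_bigr => j _; rewrite -!sumrB.
  apply: eq_bigr => l /andP [lt_jl Ejl].
  case: (leqP i l) => [le_il|lt_li].
    have Zj : zone i j.
      rewrite /zone; case: (leqP i j) => //= lt_ji.
      rewrite Nd_Nc /Nc /iplus !inE -ltnNge lt_ji /=.
      by apply/existsP; exists l; rewrite inE le_il Ec_sym.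
    have [-> ->] := zone_eq j Zj.
    by have [-> ->] := zone_eq l (introT orP (or_introl le_il)).
  have [-> ->] := below_eq j (ltn_trans lt_jl lt_li).
  by have [-> ->] := below_eq l lt_li; rewrite !subrr.
rewrite -/(X b1) -/(X b2) -/(X b3) -/(X b4) -/(Y b1) -/(Y b2) -/(Y b3) -/(Y b4).
lra.
Qed.

End Zone.

Section DiscountedValue.
Variables (R : realType) (n : nat) (S : finType) (Act : 'I_n -> finType).
Variables (P : S -> joint Act -> S -> R) (r : S -> joint Act -> R) (gamma : R).
Hypothesis P_ge0 : forall s a s', 0 <= P s a s'.
Hypothesis P_sum1 : forall s a, \sum_(s' : S) P s a s' = 1.
Hypothesis gamma_01 : 0 <= gamma < 1.

Let gamma_ge0 : 0 <= gamma. Proof. by case/andP: gamma_01. Qed.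

Lemma sdist_ge0 sg s t s' : 0 <= sdist P sg s t s'.
Proof.
elim: t s' => [|t IH] s' /=; first by case: (s' == s).
by apply: sumr_ge0 => u _; apply: mulr_ge0.
Qed.

Lemma sdist_sum1 sg s t : \sum_(s' : S) sdist P sg s t s' = 1.
Proof.
elim: t => [|t IH] /=.
  by rewrite (bigD1 s) //= eqxx big1 ?addr0 // => u /negbTE ->.
rewrite exchange_big /= -[RHS]IH; apply: eq_bigr => u _.
by rewrite -mulr_sumr P_sum1 mulr1.
Qed.

Lemma sdist_le1 sg s t s' : sdist P sg s t s' <= 1.
Proof.
rewrite -(sdist_sum1 sg s t) (bigD1 s') //= lerDl.
by apply: sumr_ge0 => u _; apply: sdist_ge0.
Qed.

(* [sdist] is defined by a last-step decomposition; this is the first-step one. *)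
Lemma sdistSl sg s t s' :
  sdist P sg s t.+1 s' = \sum_(u : S) P s (sg s) u * sdist P sg u t s'.
Proof.
elim: t s' => [|t IH] s'.
  rewrite /= (bigD1 s) //= eqxx mul1r big1 ?addr0; last by move=> u /negbTE ->; rewrite mul0r.
  rewrite (bigD1 s') //= eqxx mulr1 big1 ?addr0 // => u /negbTE; rewrite eq_sym => ->.
  by rewrite mulr0.
transitivity (\sum_(s'' : S)
    (\sum_(u : S) P s (sg s) u * sdist P sg u t s'') * P s'' (sg s'') s').
  by apply: eq_bigr => s'' _; rewrite -IH.
under eq_bigr do rewrite mulr_suml.
rewrite exchange_big /=; apply: eq_bigr => u _.
by rewrite mulr_sumr; apply: eq_bigr => s'' _; rewrite mulrA.
Qed.

Definition exp_reward sg t s := \sum_(s' : S) sdist P sg s t s' * r s' (sg s').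
Definition trunc_value sg N s := \sum_(t < N) gamma ^+ t * exp_reward sg t s.

Lemma exp_rewardS sg t s :
  exp_reward sg t.+1 s = \sum_(u : S) P s (sg s) u * exp_reward sg t u.
Proof.
rewrite /exp_reward; under eq_bigr do rewrite sdistSl mulr_suml.
rewrite exchange_big /=; apply: eq_bigr => u _.
by rewrite mulr_sumr; apply: eq_bigr => s' _; rewrite mulrA.
Qed.

Lemma exp_reward0 sg s : exp_reward sg 0 s = r s (sg s).
Proof.
rewrite /exp_reward /= (bigD1 s) //= eqxx mul1r big1 ?addr0 // => u /negbTE ->.
by rewrite mul0r.
Qed.

Lemma trunc_valueS sg N s :
  trunc_value sg N.+1 s = r s (sg s) + gamma * \sum_(u : S) P s (sg s) u * trunc_value sg N u.
Proof.
rewrite /trunc_value big_ord_recl /= expr0 mul1r exp_reward0; congr (_ + _).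
under eq_bigr do rewrite /bump /= add1n exp_rewardS exprS.
under [in RHS]eq_bigr do rewrite /trunc_value mulr_sumr.
rewrite exchange_big /= mulr_sumr; apply: eq_bigr => t _.
by rewrite !mulr_sumr; apply: eq_bigr => u _; rewrite /=; lra.
Qed.

(* Absolute convergence by comparison with the geometric series of ratio gamma. *)
Lemma trunc_value_cvg sg s : cvgn (trunc_value sg ^~ s).
Proof.
set f := fun t => gamma ^+ t * exp_reward sg t s.
have -> : trunc_value sg ^~ s = series f.
  by apply/funext => N; rewrite /series /= /trunc_value big_mkord.
apply: normed_cvg.
set M := \sum_(s' : S) `|r s' (sg s')|.
apply: (@series_le_cvg _ _ (geometric M gamma)).
- by move=> t; rewrite normr_ge0.
- move=> t; rewrite /geometric /= mulr_ge0 ?exprn_ge0 //.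
  by apply: sumr_ge0 => u _.
- move=> t; rewrite /geometric /f /= normrM mulrC (ger0_norm (exprn_ge0 t gamma_ge0)).
  apply: ler_wpM2r; first by rewrite exprn_ge0.
  rewrite /exp_reward; apply: le_trans (ler_norm_sum _ _ _) _; apply: ler_sum => u _.
  rewrite normrM ger0_norm ?sdist_ge0 //.
  by rewrite -[X in _ <= X]mul1r ler_wpM2r ?sdist_le1.
- by apply: is_cvg_geometric_series; case/andP: gamma_01 => g0 g1; rewrite ger0_norm.
Qed.

Lemma Vsig_bellman sg s :
  Vsig P r gamma sg s = r s (sg s) + gamma * \sum_(u : S) P s (sg s) u * Vsig P r gamma sg u.
Proof.
have value_lim s' : trunc_value sg ^~ s' @ \oo --> Vsig P r gamma sg s'.
  exact: trunc_value_cvg.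
have lim_shift : (fun N => trunc_value sg N.+1 s) @ \oo --> Vsig P r gamma sg s.
  by rewrite (cvg_shiftS (trunc_value sg ^~ s)); exact: value_lim.
have lim_bellman : (fun N => trunc_value sg N.+1 s) @ \oo -->
    r s (sg s) + gamma * \sum_(u : S) P s (sg s) u * Vsig P r gamma sg u.
  under eq_cvg do rewrite trunc_valueS.
  apply: cvgD; first exact: cvg_cst.
  apply: cvgM; first exact: cvg_cst.
  apply: cvg_big => //; first exact: add_continuous.
  by move=> u _; apply: cvgM; [exact: cvg_cst | exact: value_lim].
exact: cvg_unique lim_shift lim_bellman.
Qed.

(* Maximum principle: at a maximiser of D, the inequality forces D <= gamma D. *)
Lemma discounted_subsolution_le0 (sg : S -> joint Act) (D : S -> R) :
  (forall s, D s <= gamma * \sum_(u : S) P s (sg s) u * D u) -> forall s, D s <= 0.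
Proof.
move=> D_sub s.
have [m _ m_max] := @arg_maxP _ _ _ s predT D isT.
have Dm_le : D m <= gamma * D m.
  apply: le_trans (D_sub m) _; apply: ler_wpM2l => //.
  rewrite -[X in _ <= X]mul1r -(P_sum1 m (sg m)) mulr_suml.
  by apply: ler_sum => u _; apply: ler_wpM2l => //; apply: m_max.
apply: le_trans (m_max s isT) _.
by case/andP: gamma_01 => g0 g1; nra.
Qed.

Lemma Vsig_ge_subsolution (sg : S -> joint Act) (W : S -> R) :
  (forall s, W s <= r s (sg s) + gamma * \sum_(u : S) P s (sg s) u * W u) ->
  forall s, W s <= Vsig P r gamma sg s.
Proof.
move=> W_sub s; rewrite -subr_le0.
apply: (@discounted_subsolution_le0 sg (fun s => W s - Vsig P r gamma sg s)) => s'.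
rewrite (eq_bigr _ (fun u _ => mulrBr _ _ _)) sumrB mulrBr.
by have := W_sub s'; rewrite [Vsig _ _ _ _ s']Vsig_bellman; lra.
Qed.

Lemma Vsig_le_supersolution (sg : S -> joint Act) (W : S -> R) :
  (forall s, r s (sg s) + gamma * \sum_(u : S) P s (sg s) u * W u <= W s) ->
  forall s, Vsig P r gamma sg s <= W s.
Proof.
move=> W_super s; rewrite -subr_le0.
apply: (@discounted_subsolution_le0 sg (fun s => Vsig P r gamma sg s - W s)) => s'.
rewrite (eq_bigr _ (fun u _ => mulrBr _ _ _)) sumrB mulrBr.
by have := W_super s'; rewrite [Vsig _ _ _ _ s']Vsig_bellman; lra.
Qed.

End DiscountedValue.

Lemma nonincreasing_nat_ev_const (f : nat -> nat) :
  (forall k, (f k.+1 <= f k)%N) -> exists K, forall k, (K <= k)%N -> f k = f K.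
Proof.
move=> f_noninc.
have f_mono := homo_leq (r := fun x y => (y <= x)%N) (@leqnn)
  (fun _ _ _ le_yx le_zy => leq_trans le_zy le_yx) f_noninc.
have f_attained : exists m, `[< exists k, f k = m >].
  by exists (f 0); apply/asboolP; exists 0%N.
case: (ex_minnP f_attained) => m /asboolP [K <-] f_min.
exists K => k le_Kk; apply/eqP; rewrite eqn_leq f_mono //=.
by apply: f_min; apply/asboolP; exists k.
Qed.

Section PolicyIteration.
Variables (R : realType) (n : nat) (S : finType) (Act : 'I_n -> finType).
Variables (P : S -> joint Act -> S -> R) (r : S -> joint Act -> R) (gamma : R).
Hypothesis P_ge0 : forall s a s', 0 <= P s a s'.
Hypothesis P_sum1 : forall s a, \sum_(s' : S) P s a s' = 1.
Hypothesis gamma_01 : 0 <= gamma < 1.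
Variables (a0 : joint Act) (Ed : rel 'I_n).
Hypothesis Ed_lt : forall i j : 'I_n, Ed j i -> (j < i)%N.
Variable pi : nat -> dpolicy S Act.
Hypothesis pi_assoc : forall k, assoc Ed (pi k).
Hypothesis pi_update : forall k (i : 'I_n) s (a : joint Act),
  is_argmax (objective P r gamma Ed a0 (pi k) (pi k.+1) i s a) (pi k.+1 i s a).

Let V k := Vpol P r gamma a0 (pi k).
Let Q k := Qpol P r gamma a0 (pi k).
Let sig k := jact a0 (pi k).

Lemma Vpol_bellman k s : V k s = Q k s (sig k s).
Proof. exact: Vsig_bellman. Qed.

(* [mixpol] with a threshold in nat, so that threshold n (all agents updated)
   is allowed. *)
Definition half_updated k (m : nat) : dpolicy S Act :=
  fun j => if (j < m)%N then pi k.+1 j else pi k j.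

Lemma half_updated_assoc k m : assoc Ed (half_updated k m).
Proof. by move=> j s a b eq_ab; rewrite /half_updated; case: ifP => _; apply: pi_assoc. Qed.

Lemma jact_half_updated0 k : jact a0 (half_updated k 0) = sig k.
Proof.
by apply/funext => s; apply: (exec_set0_indep Ed_lt) => //; apply: half_updated_assoc.
Qed.

Lemma jact_half_updatedn k : jact a0 (half_updated k n) = sig k.+1.
Proof.
apply/funext => s; apply: (exec_set0_indep Ed_lt) => //; first exact: half_updated_assoc.
by move=> j c; rewrite /half_updated ltn_ord.
Qed.

(* Agent i's update, taken at the joint action b of the policy in which agents
   up to i are updated, compares b with the joint action obtained when agent i
   keeps its old policy. *)
Lemma Q_half_updated_step k (i : 'I_n) s :
  Q k s (jact a0 (half_updated k i) s) <= Q k s (jact a0 (half_updated k i.+1) s).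
Proof.
set b := jact a0 (half_updated k i.+1) s; set c := jact a0 (half_updated k i) s.
have b_spec := exec_specP Ed_lt s finset.set0 a0 (half_updated_assoc k i.+1).
have c_spec := exec_specP Ed_lt s finset.set0 a0 (half_updated_assoc k i).
have mix_i : mixpol (pi k.+1) (pi k) i = half_updated k i by [].
have bc_pre : forall l : 'I_n, (l < i)%N -> c l = b l.
  apply: (exec_spec_agree Ed_lt (Z := fun l : 'I_n => (l < i)%N)
    (half_updated_assoc k i) c_spec b_spec) => // j lt_ji _.
  split; first by move=> c'; rewrite /half_updated lt_ji ltnW.
  by move=> l /Ed_lt lt_lj; apply: ltn_trans lt_lj lt_ji.
have new_b : exec (mixpol (pi k.+1) (pi k) i) s (Ndc Ed i) (jupd b (pi k.+1 i s b)) = b.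
  have -> : pi k.+1 i s b = b i by rewrite b_spec finset.in_set0 /half_updated ltnSn.
  rewrite jupd_id mix_i.
  apply: (exec_spec_uniq Ed_lt (half_updated_assoc k i)
    (exec_specP Ed_lt _ _ _ (half_updated_assoc k i))).
  move=> j; case: ifP => // jN; rewrite {1}b_spec finset.in_set0 /half_updated ltnS leq_eqVlt.
  suff /negbTE -> : (j : nat) != i by [].
  by apply: contraFneq jN => eq_ji; rewrite (val_inj eq_ji) /Ndc setU11.
have old_c : exec (mixpol (pi k.+1) (pi k) i) s (Ndc Ed i) (jupd b (pi k i s b)) = c.
  rewrite mix_i.
  apply: (exec_spec_uniq Ed_lt (half_updated_assoc k i)
    (exec_specP Ed_lt _ _ _ (half_updated_assoc k i))).
  move=> j; case: ifP => jN; last by rewrite {1}c_spec finset.in_set0.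
  case: (eqVneq i j) => [<-|neq_ij].
    rewrite jupd_same c_spec finset.in_set0 /half_updated ltnn.
    by apply: pi_assoc => l /Ed_lt; apply: bc_pre.
  rewrite jupd_other //; apply: bc_pre.
  by move: jN; rewrite /Ndc !inE eq_sym (negbTE neq_ij) => /Ed_lt.
by have := @pi_update k i s b (pi k i s b); rewrite /objective new_b old_c.
Qed.

Lemma policy_improvement k s : Q k s (sig k s) <= Q k s (sig k.+1 s).
Proof.
have Q_half m : (m <= n)%N -> Q k s (sig k s) <= Q k s (jact a0 (half_updated k m) s).
  elim: m => [_|m IH lt_mn]; first by rewrite jact_half_updated0.
  apply: le_trans (IH (ltnW lt_mn)) _.
  exact: (Q_half_updated_step k (Ordinal lt_mn)).
by rewrite -jact_half_updatedn; apply: Q_half.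
Qed.

Lemma Vpol_mono k s : V k s <= V k.+1 s.
Proof.
apply: (Vsig_ge_subsolution P_ge0 P_sum1 gamma_01) => s'.
by rewrite Vpol_bellman; apply: policy_improvement.
Qed.

(* The number of deterministic policies dominating V_k is nonincreasing in k,
   and V_k is itself the value of such a policy. *)
Lemma Vpol_ev_const :
  exists K, (1 <= K)%N /\ forall k, (K <= k)%N -> forall s, V k s = V K s.
Proof.
pose dominating k := [set sg : {ffun S -> joint Act} |
  [forall s, V k s <= Vsig P r gamma sg s]].
have dominatingS k : dominating k.+1 \subset dominating k.
  apply/fintype.subsetP => sg; rewrite !inE => /forallP dom_sg; apply/forallP => s.
  exact: le_trans (Vpol_mono k s) (dom_sg s).
have V_Vsig k s : Vsig P r gamma [ffun s => sig k s] s = V k s.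
  by congr (Vsig _ _ _ _ _); apply/funext => x; rewrite ffunE.
have card_eq k : #|dominating k.+1| = #|dominating k| -> forall s, V k.+1 s = V k s.
  move=> /subset_cardP /(_ (dominatingS k)) eq_dom s.
  apply/le_anti; rewrite Vpol_mono andbT.
  have : [ffun s => sig k s] \in dominating k.
    by rewrite inE; apply/forallP => s'; rewrite V_Vsig.
  by rewrite -eq_dom inE => /forallP /(_ s); rewrite V_Vsig.
have [K0 card_const] := nonincreasing_nat_ev_const
  (fun k => subset_leq_card (dominatingS k)).
have V_const d s : V (K0.+1 + d) s = V K0.+1 s.
  elim: d => [|d IH]; first by rewrite addn0.
  by rewrite addnS card_eq ?IH // !card_const //; lia.
by exists K0.+1; split => // k le_Kk s; rewrite -(subnKC le_Kk) V_const.
Qed.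

Hypothesis pi_singleton : forall k (i : 'I_n) s (a : joint Act) (x y : Act i),
  (1 <= k)%N ->
  is_argmax (objective P r gamma Ed a0 (pi k) (pi k.+1) i s a) x ->
  is_argmax (objective P r gamma Ed a0 (pi k) (pi k.+1) i s a) y -> x = y.
Variable Ec : rel 'I_n.
Hypothesis Ec_sym : symmetric Ec.
Hypothesis Qcirc_CG : is_CG Ec (QofV P r gamma (Vcirc P r gamma a0 pi)).
Hypothesis Nd_Nc : forall i : 'I_n, Nd Ed i = Nc Ec (iplus i).

Let Qc := QofV P r gamma (Vcirc P r gamma a0 pi).

Section Converged.
Variable K1 : nat.
Hypothesis K1_gt0 : (1 <= K1)%N.
Hypothesis V_const : forall k, (K1 <= k)%N -> forall s, V k s = V K1 s.

Lemma Vcirc_eqV s : Vcirc P r gamma a0 pi s = V K1 s.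
Proof.
apply: cvg_lim => //; apply: cvg_near_cst.
by exists K1 => // k /= le_K1k; apply: V_const.
Qed.

Lemma Qpol_Qcirc k : (K1 <= k)%N -> forall s a, Q k s a = Qc s a.
Proof.
move=> le_K1k s a; rewrite /Q /Qc /Qpol /QofV; congr (_ + _ * _).
by apply: eq_bigr => u _; rewrite Vcirc_eqV -(V_const le_K1k).
Qed.

Lemma objective_Qcirc k (i : 'I_n) s (a : joint Act) (x : Act i) : (K1 <= k)%N ->
  objective P r gamma Ed a0 (pi k) (pi k.+1) i s a x =
  Qc s (exec (mixpol (pi k.+1) (pi k) i) s (Ndc Ed i) (jupd a x)).
Proof. by move=> le_K1k; apply: (Qpol_Qcirc le_K1k). Qed.

(* Once Q^k = Q^o, agent i's objective differences only depend on the
   policies of its successors, so by the singleton argmax assumption its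
   update only depends on them as well. *)
Lemma policy_update_eq k k' (i : 'I_n) : (K1 <= k)%N -> (K1 <= k')%N ->
  (forall j : 'I_n, (i < j)%N -> forall s c, pi k j s c = pi k' j s c) ->
  forall s a, pi k.+1 i s a = pi k'.+1 i s a.
Proof.
move=> le_K1k le_K1k' eq_succ s a.
pose e kk (x : Act i) := exec (mixpol (pi kk.+1) (pi kk) i) s (Ndc Ed i) (jupd a x).
have mix_assoc kk : assoc Ed (mixpol (pi kk.+1) (pi kk) i) by apply: assoc_mixpol.
have e_zone x j : zone Ed i j -> e k x j = e k' x j.
  apply: (exec_zone_agree Ed_lt Nd_Nc) => // [j' Zj'|j' Zj'|j' lt_ij' c].
  - exact: zone_mem_Ndc.
  - exact: zone_mem_Ndc.
  - by rewrite /mixpol ltnNge (ltnW lt_ij') /=; apply: eq_succ.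
have e_diff x y : Qc s (e k x) - Qc s (e k y) = Qc s (e k' x) - Qc s (e k' y).
  apply: (CG_diff_zone Ec_sym Nd_Nc (i := i) s Qcirc_CG) => j.
    by move=> Zj; split; apply: e_zone.
  by move=> lt_ji; split; apply: (exec_jupd_lt Ed_lt _ _ _ _ _ (mix_assoc _) lt_ji).
apply: (@pi_singleton k' i s a _ _ (leq_trans K1_gt0 le_K1k') _ (@pi_update k' i s a)) => y.
have := @pi_update k i s a y; rewrite !objective_Qcirc // => opt_k.
by rewrite -subr_ge0 -e_diff subr_ge0.
Qed.

(* Agents stabilise one at a time, from the last one down to the first. *)
Lemma policy_tail_const d (j : 'I_n) : (n - d <= j)%N ->
  forall k, (K1 + d <= k)%N -> forall s c, pi k j s c = pi (K1 + d) j s c.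
Proof.
elim: d j => [|d IH] j le_j k le_k s c.
  by move: le_j; rewrite subn0 leqNgt ltn_ord.
have le_Kdk : (K1 + d <= k)%N by apply: leq_trans le_k; rewrite leq_add2l.
case: (leqP (n - d) j) => [le_ndj|lt_jnd].
  by rewrite (IH j le_ndj k) // (IH j le_ndj (K1 + d.+1)) // leq_add2l.
rewrite addnS in le_k *; rewrite -(ltn_predK le_k).
have le_Kdk' : (K1 + d <= k.-1)%N by rewrite -ltnS (ltn_predK le_k).
apply: policy_update_eq; [exact: leq_trans (leq_addr d K1) le_Kdk' | exact: leq_addr |].
move=> l lt_jl; apply: IH => //.
by rewrite -(ltn_predK lt_jnd) -subnS; apply: leq_ltn_trans le_j lt_jl.
Qed.

Let K := (K1 + n)%N.

Let le_K1K : (K1 <= K)%N. Proof. exact: leq_addr. Qed.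

Lemma pi_succK j s c : pi K.+1 j s c = pi K j s c.
Proof. by apply: policy_tail_const; rewrite ?subnn // leqnSn. Qed.

(* Since pi^{K+1} = pi^K, each agent of pi^K already plays the best response
   to the actions of the others; releasing agents one by one therefore never
   decreases Q^o. *)
Lemma greedy_release_step s b (i : 'I_n) :
  Qc s (exec (pi K) s [set j : 'I_n | (j < i.+1)%N] b) <=
  Qc s (exec (pi K) s [set j : 'I_n | (j < i)%N] b).
Proof.
pose G (x : Act i) := exec (pi K) s [set j : 'I_n | (j < i.+1)%N] (jupd b x).
pose e (x : Act i) := exec (mixpol (pi K.+1) (pi K) i) s (Ndc Ed i) (jupd b x).
have G_zone x j : zone Ed i j -> G x j = e x j.
  apply: (exec_zone_agree Ed_lt Nd_Nc) => //.
  - exact: assoc_mixpol.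
  - by move=> j' _; rewrite inE.
  - exact: zone_mem_Ndc.
  - by move=> j' lt_ij' c; rewrite /mixpol ltnNge (ltnW lt_ij').
have le_G : Qc s (G (b i)) <= Qc s (G (pi K.+1 i s b)).
  rewrite -subr_ge0 (CG_diff_zone Ec_sym Nd_Nc (i := i) s
    (b3 := e (pi K.+1 i s b)) (b4 := e (b i)) Qcirc_CG).
  - by rewrite subr_ge0; have := @pi_update K i s b (b i); rewrite !objective_Qcirc.
  - by move=> j Zj; split; apply: G_zone.
  - by move=> j lt_ji; split; apply: (exec_jupd_lt Ed_lt) => //; apply: assoc_mixpol.
rewrite -(exec_prefixS Ed_lt s b i (pi_assoc K)) -pi_succK.
by rewrite -{1}(jupd_id b i).
Qed.

Lemma Qcirc_greedy_max s b : Qc s b <= Qc s (sig K s).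
Proof.
have le_prefix d : (d <= n)%N ->
    Qc s b <= Qc s (exec (pi K) s [set j : 'I_n | (j < n - d)%N] b).
  elim: d => [_|d IH lt_dn].
    by rewrite subn0 (exec_fullset Ed_lt _ _ (pi_assoc K)).
  have lt_n : (n - d.+1 < n)%N by lia.
  apply: le_trans (IH (ltnW lt_dn)) _.
  have -> : (n - d = (Ordinal lt_n).+1)%N by rewrite /=; lia.
  exact: greedy_release_step.
have := le_prefix n (leqnn n); rewrite subnn.
have -> : [set j : 'I_n | (j < 0)%N]%SET = finset.set0 by apply/setP => j; rewrite !inE.
by rewrite (exec_set0_indep Ed_lt b a0 (pi_assoc K) (pi_assoc K)) //.
Qed.

Lemma Vpol_optimal s : V K s = Vstar P r gamma s.
Proof.
have Vsig_le sg s' : Vsig P r gamma sg s' <= V K s'.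
  apply: (Vsig_le_supersolution P_ge0 P_sum1 gamma_01) => u.
  rewrite Vpol_bellman.
  have -> : r u (sg u) + gamma * \sum_(u' : S) P u (sg u) u' * V K u' = Q K u (sg u) by [].
  by rewrite !(Qpol_Qcirc le_K1K); apply: Qcirc_greedy_max.
apply/le_anti/andP; split.
  apply: ub_le_sup; last by exists (sig K).
  by exists (V K s) => _ [sg _ <-]; exact: Vsig_le.
apply: ge_sup; first by exists (V K s), (sig K).
by move=> _ [sg _ <-]; exact: Vsig_le.
Qed.

End Converged.
End PolicyIteration.

Theorem mainTheorem3 (R : realType) (n : nat) (S : finType) (Act : 'I_n -> finType)
  (P : S -> joint Act -> S -> R) (r : S -> joint Act -> R) (gamma : R)
  (HP0 : forall s a s', 0 <= P s a s')
  (HP1 : forall s a, \sum_(s' : S) P s a s' = 1)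
  (Hgamma : 0 <= gamma < 1)
  (a0 : joint Act)
  (Ed : rel 'I_n) (HEd : forall i j : 'I_n, Ed j i -> (j < i)%N)
  (pi : nat -> dpolicy S Act)
  (Hassoc : forall k, assoc Ed (pi k))
  (Hupdate : forall (k : nat) (i : 'I_n) (s : S) (a : joint Act),
     is_argmax (objective P r gamma Ed a0 (pi k) (pi k.+1) i s a) (pi k.+1 i s a))
  (Hsingleton : forall (k : nat) (i : 'I_n) (s : S) (a : joint Act) (x y : Act i),
     (1 <= k)%N ->
     is_argmax (objective P r gamma Ed a0 (pi k) (pi k.+1) i s a) x ->
     is_argmax (objective P r gamma Ed a0 (pi k) (pi k.+1) i s a) y -> x = y)
  (Ec : rel 'I_n) (HEc_sym : symmetric Ec) (HEc_irr : irreflexive Ec)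
  (HCG : is_CG Ec (QofV P r gamma (Vcirc P r gamma a0 pi)))
  (HN : forall i : 'I_n, Nd Ed i = Nc Ec (iplus i)) :
  exists K : nat,
    (forall k, (K <= k)%N -> forall (i : 'I_n) (s : S) (a : joint Act), pi k i s a = pi K i s a) /\
    (forall s, Vpol P r gamma a0 (pi K) s = Vstar P r gamma s).
Proof.
have [K1 [K1_gt0 V_const]] := Vpol_ev_const HP0 HP1 Hgamma HEd Hassoc Hupdate.
exists (K1 + n)%N; split.
  move=> k le_k i s a.
  by apply: (policy_tail_const HEd Hassoc Hupdate Hsingleton HEc_sym HCG HN K1_gt0 V_const);
    rewrite ?subnn.
exact: (Vpol_optimal HP0 HP1 Hgamma HEd Hassoc Hupdate Hsingleton HEc_sym HCG HN K1_gt0 V_const).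
Qed.
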